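(* For every constant $C$ with $0<C<1/\log 4$ there exists a constant $E>0$ depending on $C$ such that, for all sufficiently large positive integers $N$ and all $x\in\left[N,\exp\!\left(C(\log N)^2\right)\right]$, \[ |\varrho_N(x)|\le\exp\!\left(-\frac{\pi^2}{400^2}\exp\!\left(E\sqrt{\log x}\right)\right). \]
   Context: For a positive integer $N$ and real $x$, $\varrho_N(x):=\prod_{n=1}^N\cos(\pi x/n)$. *)

From Stdlib Require Import Reals.
Open Scope R_scope.

Fixpoint rho (N : nat) (x : R) : R :=
  match N with
  | O => 1
  | S m => rho m x * cos (PI * x / INR (S m))
  end.

(* If x/t, x/(t+1), ..., x/(t+k) were all within 1/(8 2^k) of integers, then
   their k-th finite difference x k! / (t (t+1) ... (t+k)) would be within 1/8 of
   an integer, which fails when the rising factorial t (t+1) ... (t+k) lies in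
   [2 x k!, 4 x k!]. So every block of k+1 consecutive n in such a window
   contributes a factor |cos (pi x / n)| <= exp (-3 / (64 4^k)) to rho_N(x).
   Take k where 2 x k! crosses below M (M+1) ... (M+k), with M = N/2: since
   ln x <= C (ln N)^2 with C ln 4 < 1, this k is at most C' ln N with C' ln 4 < 1,
   and M^k < 2 x k! then leaves a window starting at about 100 4^k k^2 N^eta
   below M, of length about 1/(2k) of its start, hence about 50 4^k N^eta blocks.
   Thus |rho_N(x)| <= exp (-c N^eta), and N^eta >= exp (E sqrt (ln x)). *)

From Stdlib Require Import Reals ZArith Lra Lia Factorial Classical.
From Coquelicot Require Import Coquelicot.
Open Scope R_scope.

Lemma exp_le_compat (a b : R) : a <= b -> exp a <= exp b.
Proof. intros [Hlt | ->]; [apply Rlt_le, exp_increasing |]; lra. Qed.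

Lemma exp_neg_mul_exp_le (c a b : R) : 0 <= c -> a <= b -> exp (- c * exp b) <= exp (- c * exp a).
Proof.
  intros Hc Hab. apply exp_le_compat.
  pose proof (exp_le_compat a b Hab). nra.
Qed.

Lemma ln_pos (a : R) : 1 < a -> 0 < ln a.
Proof. intros Ha. rewrite <- ln_1. apply ln_increasing; lra. Qed.

Lemma ln_nonneg (a : R) : 1 <= a -> 0 <= ln a.
Proof. intros Ha. rewrite <- ln_1. apply ln_le; lra. Qed.

Lemma pow_eq_exp_ln (t : R) (n : nat) : 0 < t -> t ^ n = exp (INR n * ln t).
Proof. intros Ht. rewrite <- Rpower_pow by exact Ht. reflexivity. Qed.

Lemma exists_nat_between (A : R) : 0 <= A -> exists n : nat, A <= INR n <= A + 1.
Proof.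
  intros HA. destruct (archimed A) as [H1 H2].
  assert (Hz : (0 <= up A)%Z) by (apply le_IZR; lra).
  exists (Z.to_nat (up A)). rewrite INR_IZR_INZ, Z2Nat.id by exact Hz. lra.
Qed.

Definition near_Z (d t : R) : Prop := exists z : Z, Rabs (t - IZR z) <= d.

Lemma near_Z_half (t : R) : near_Z (1 / 2) t.
Proof.
  destruct (archimed t) as [Hup Hup'].
  destruct (Rle_dec (t - IZR (up t - 1)) (1 / 2)) as [Hle | Hgt].
  - exists (up t - 1)%Z. rewrite minus_IZR in *. rewrite Rabs_right; lra.
  - exists (up t). rewrite minus_IZR in Hgt. rewrite Rabs_left; lra.
Qed.

Lemma Rabs_cos_add_IZR_PI (y : R) (z : Z) : Rabs (cos (y + IZR z * PI)) = Rabs (cos y).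
Proof.
  assert (Hsin : sin (IZR z * PI) = 0) by (apply sin_eq_0_1; exists z; reflexivity).
  assert (Hcos : Rabs (cos (IZR z * PI)) = 1).
  { pose proof (sin2_cos2 (IZR z * PI)) as H. rewrite Hsin in H.
    rewrite <- sqrt_Rsqr_abs, <- sqrt_1. f_equal. unfold Rsqr in *. lra. }
  rewrite cos_plus, Hsin, Rmult_0_r, Rminus_0_r, Rabs_mult, Hcos, Rmult_1_r.
  reflexivity.
Qed.

Lemma cos_le_1_sub_sqr_div3 (y : R) : - PI / 2 <= y <= PI / 2 -> cos y <= 1 - y ^ 2 / 3.
Proof.
  intros [Hlo Hhi].
  destruct (cos_bound y 0 Hlo Hhi) as [_ Hub].
  unfold cos_approx, cos_term in Hub. simpl in Hub.
  assert (y ^ 2 <= 4) by (pose proof PI_4; nra).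
  nra.
Qed.

Lemma Rabs_cos_PI_le (u d : R) : 0 <= d <= Rabs u -> Rabs u <= 1 / 2 ->
  Rabs (cos (PI * u)) <= 1 - 3 * d ^ 2.
Proof.
  intros [Hd Hdu] Hu.
  assert (Heven : cos (PI * u) = cos (PI * Rabs u)).
  { unfold Rabs; destruct (Rcase_abs u); [rewrite <- cos_neg; f_equal; ring | reflexivity]. }
  pose proof PI_RGT_0. pose proof PI_4. pose proof (Rabs_pos u).
  assert (Hrange : - PI / 2 <= PI * Rabs u <= PI / 2) by nra.
  assert (Hpos : 0 <= cos (PI * Rabs u)) by (apply cos_ge_0; lra).
  rewrite Heven, Rabs_right by lra.
  pose proof (cos_le_1_sub_sqr_div3 _ Hrange).
  assert (3 * d <= PI * Rabs u) by (pose proof PI2_3_2; nra).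
  assert (9 * d ^ 2 <= (PI * Rabs u) ^ 2) by nra.
  lra.
Qed.

Lemma Rabs_cos_PI_far (t d : R) : 0 <= d -> ~ near_Z d t ->
  Rabs (cos (PI * t)) <= exp (- (3 * d ^ 2)).
Proof.
  intros Hd Hfar. destruct (near_Z_half t) as [z Hz].
  assert (Hdz : d <= Rabs (t - IZR z)).
  { apply Rnot_lt_le. intros Hlt. apply Hfar. exists z. lra. }
  replace (PI * t) with (PI * (t - IZR z) + IZR z * PI) by ring.
  rewrite Rabs_cos_add_IZR_PI.
  pose proof (exp_ineq1_le (- (3 * d ^ 2))).
  pose proof (Rabs_cos_PI_le (t - IZR z) d (conj Hd Hdz) Hz). lra.
Qed.

Fixpoint rising (t : R) (n : nat) : R :=
  match n with
  | O => 1
  | S m => rising t m * (t + INR m)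
  end.

Lemma rising_nonneg (t : R) (n : nat) : 0 <= t -> 0 <= rising t n.
Proof.
  intros Ht. induction n as [| n IH]; simpl; [lra |].
  apply Rmult_le_pos; [exact IH | pose proof (pos_INR n); lra].
Qed.

Lemma rising_pos (t : R) (n : nat) : 0 < t -> 0 < rising t n.
Proof.
  intros Ht. induction n as [| n IH]; simpl; [lra |].
  apply Rmult_lt_0_compat; [exact IH | pose proof (pos_INR n); lra].
Qed.

Lemma rising_S_l (t : R) (n : nat) : rising t (S n) = t * rising (t + 1) n.
Proof.
  induction n as [| n IH]; [simpl; ring |].
  change (rising t (S (S n))) with (rising t (S n) * (t + INR (S n))).
  rewrite IH. simpl rising. rewrite S_INR. ring.
Qed.

Lemma rising_le_compat (t t' : R) (n : nat) : 0 <= t <= t' -> rising t n <= rising t' n.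
Proof.
  intros Ht. induction n as [| n IH]; simpl; [lra |].
  pose proof (pos_INR n). pose proof (rising_nonneg t n (proj1 Ht)).
  apply Rmult_le_compat; lra.
Qed.

Lemma pow_le_rising (t : R) (n : nat) : 0 <= t -> t ^ n <= rising t n.
Proof.
  intros Ht. induction n as [| n IH]; simpl; [lra |].
  pose proof (pos_INR n). pose proof (pow_le t n Ht).
  rewrite Rmult_comm. apply Rmult_le_compat; lra.
Qed.

Lemma rising_le_pow (t : R) (n : nat) : 0 <= t -> rising t n <= (t + INR n) ^ n.
Proof.
  intros Ht. induction n as [| n IH]; [simpl; lra |].
  change (rising t n * (t + INR n) <= (t + INR (S n)) * (t + INR (S n)) ^ n).
  pose proof (pos_INR n). pose proof (rising_nonneg t n Ht).
  rewrite Rmult_comm, S_INR. apply Rmult_le_compat; [lra | lra | lra |].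
  apply (Rle_trans _ _ _ IH). apply pow_incr. lra.
Qed.

Lemma rising_add_le (t s : R) (n : nat) : 0 < t -> 0 <= s ->
  rising (t + s) n <= rising t n * exp (INR n * s / t).
Proof.
  intros Ht Hs. induction n as [| n IH].
  - simpl. unfold Rdiv. rewrite !Rmult_0_l, exp_0. lra.
  - change (rising (t + s) (S n)) with (rising (t + s) n * (t + s + INR n)).
    change (rising t (S n)) with (rising t n * (t + INR n)).
    rewrite S_INR.
    replace ((INR n + 1) * s / t) with (INR n * s / t + s / t) by (field; lra).
    rewrite exp_plus.
    pose proof (pos_INR n).
    assert (Hfactor : t + s + INR n <= (t + INR n) * exp (s / t)).
    { apply (Rle_trans _ ((t + INR n) * (1 + s / t))).
      - assert (0 <= INR n * (s / t)) by (apply Rmult_le_pos; [lra | apply Rdiv_le_0_compat; lra]).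
        replace ((t + INR n) * (1 + s / t)) with (t + s + INR n + INR n * (s / t)) by (field; lra).
        lra.
      - apply Rmult_le_compat_l; [lra | apply exp_ineq1_le]. }
    pose proof (rising_pos (t + s) n ltac:(lra)).
    apply (Rle_trans _ ((rising t n * exp (INR n * s / t)) * ((t + INR n) * exp (s / t)))).
    + apply Rmult_le_compat; lra.
    + right. ring.
Qed.

Fixpoint fdiff (f : R -> R) (k : nat) (t : R) : R :=
  match k with
  | O => f t
  | S k' => fdiff f k' t - fdiff f k' (t + 1)
  end.

Lemma fdiff_div (x t : R) (k : nat) : 0 < t ->
  fdiff (fun u => x / u) k t = x * INR (fact k) / rising t (S k).
Proof.
  revert t. induction k as [| k IH]; intros t Ht; [simpl; field; lra |].
  change (fdiff (fun u => x / u) (S k) t)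
    with (fdiff (fun u => x / u) k t - fdiff (fun u => x / u) k (t + 1)).
  rewrite (IH t Ht), (IH (t + 1)) by lra.
  rewrite (rising_S_l t (S k)), (rising_S_l t k).
  change (rising (t + 1) (S k)) with (rising (t + 1) k * (t + 1 + INR k)).
  rewrite fact_simpl, mult_INR, S_INR.
  pose proof (rising_pos (t + 1) k ltac:(lra)). pose proof (pos_INR k).
  field. repeat split; lra.
Qed.

Lemma fdiff_near_Z (f : R -> R) (d t : R) (k : nat) :
  (forall j, (j <= k)%nat -> near_Z d (f (t + INR j))) -> near_Z (2 ^ k * d) (fdiff f k t).
Proof.
  revert t. induction k as [| k IH]; intros t Hnear.
  - destruct (Hnear O (le_n O)) as [z Hz]. exists z. simpl in *.
    rewrite Rplus_0_r in Hz. lra.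
  - destruct (IH t) as [z1 H1].
    { intros j Hj. apply Hnear. lia. }
    destruct (IH (t + 1)) as [z2 H2].
    { intros j Hj. replace (t + 1 + INR j) with (t + INR (S j)) by (rewrite S_INR; ring).
      apply Hnear. lia. }
    exists (z1 - z2)%Z. simpl fdiff. rewrite minus_IZR.
    replace (fdiff f k t - fdiff f k (t + 1) - (IZR z1 - IZR z2))
      with ((fdiff f k t - IZR z1) - (fdiff f k (t + 1) - IZR z2)) by ring.
    apply (Rle_trans _ _ _ (Rabs_triang _ _)). rewrite Rabs_Ropp. simpl. lra.
Qed.

Lemma exists_far_from_Z (x t : R) (k : nat) : 0 < t ->
  2 * (x * INR (fact k)) <= rising t (S k) <= 4 * (x * INR (fact k)) ->
  exists j, (j <= k)%nat /\ ~ near_Z (/ (8 * 2 ^ k)) (x / (t + INR j)).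
Proof.
  intros Ht [Hlo Hhi].
  apply NNPP. intros Hall.
  assert (Hpow : 0 < 2 ^ k) by (apply pow_lt; lra).
  destruct (fdiff_near_Z (fun u => x / u) (/ (8 * 2 ^ k)) t k) as [z Hz].
  { intros j Hj. apply NNPP. intros Hfar. apply Hall. exists j. split; assumption. }
  rewrite fdiff_div in Hz by exact Ht.
  replace (2 ^ k * / (8 * 2 ^ k)) with (/ 8) in Hz by (field; lra).
  pose proof (rising_pos t (S k) Ht) as Hr.
  assert (Hq : 1 / 4 <= x * INR (fact k) / rising t (S k) <= 1 / 2).
  { split; apply (Rmult_le_reg_r (rising t (S k))); try exact Hr;
      field_simplify; lra. }
  assert (Hz01 : 0 < IZR z < 1) by (apply Rabs_le_between' in Hz; lra).
  destruct Hz01 as [Hz0 Hz1]. apply lt_IZR in Hz0, Hz1. lia.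
Qed.

Lemma Rabs_rho_S_le (n : nat) (x : R) : Rabs (rho (S n) x) <= Rabs (rho n x).
Proof.
  change (rho (S n) x) with (rho n x * cos (PI * x / INR (S n))).
  rewrite Rabs_mult.
  assert (Rabs (cos (PI * x / INR (S n))) <= 1) by (apply Rabs_le, COS_bound).
  pose proof (Rabs_pos (rho n x)). pose proof (Rabs_pos (cos (PI * x / INR (S n)))).
  nra.
Qed.

Lemma Rabs_rho_antimono (m n : nat) (x : R) : (m <= n)%nat -> Rabs (rho n x) <= Rabs (rho m x).
Proof.
  induction 1 as [| n _ IH]; [lra |].
  exact (Rle_trans _ _ _ (Rabs_rho_S_le n x) IH).
Qed.

Lemma Rabs_rho_le_1 (n : nat) (x : R) : Rabs (rho n x) <= 1.
Proof.
  rewrite <- Rabs_R1. change 1 with (rho O x). apply Rabs_rho_antimono. lia.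
Qed.

Lemma Rabs_rho_block (x q : R) (n k : nat) : 0 <= q ->
  (exists j, (j <= k)%nat /\ Rabs (cos (PI * x / INR (S (n + j)))) <= q) ->
  Rabs (rho (n + S k) x) <= q * Rabs (rho n x).
Proof.
  intros Hq [j [Hj Hcos]].
  apply (Rle_trans _ (Rabs (rho (S (n + j)) x))); [apply Rabs_rho_antimono; lia |].
  change (rho (S (n + j)) x) with (rho (n + j) x * cos (PI * x / INR (S (n + j)))).
  rewrite Rabs_mult.
  assert (Rabs (rho (n + j) x) <= Rabs (rho n x)) by (apply Rabs_rho_antimono; lia).
  pose proof (Rabs_pos (rho (n + j) x)). pose proof (Rabs_pos (cos (PI * x / INR (S (n + j))))).
  nra.
Qed.

Lemma Rabs_rho_blocks (x q : R) (a k B : nat) : 0 <= q ->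
  (forall i, (i < B)%nat -> exists j, (j <= k)%nat /\
     Rabs (cos (PI * x / INR (S (a + i * S k + j)))) <= q) ->
  Rabs (rho (a + B * S k) x) <= q ^ B.
Proof.
  intros Hq. induction B as [| B IH]; intros Hblocks.
  - rewrite Nat.add_0_r. apply Rabs_rho_le_1.
  - replace (a + S B * S k)%nat with (a + B * S k + S k)%nat by lia.
    apply (Rle_trans _ _ _ (Rabs_rho_block x q _ k Hq (Hblocks B (Nat.lt_succ_diag_r B)))).
    simpl. apply Rmult_le_compat_l; [exact Hq |].
    apply IH. intros i Hi. apply Hblocks. lia.
Qed.

Lemma exp_half_lt_2 : exp (1 / 2) < 2.
Proof.
  assert (H : exp (1 / 2) * exp (1 / 2) = exp 1) by (rewrite <- exp_plus; f_equal; lra).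
  pose proof exp_le_3. pose proof (exp_pos (1 / 2)). nra.
Qed.

Lemma rising_add_lt_double (t s : R) (n : nat) : 0 < t -> 0 <= s -> 2 * (INR n * s) <= t ->
  rising (t + s) n < 2 * rising t n.
Proof.
  intros Ht Hs Hsmall.
  assert (Hexp : exp (INR n * s / t) < 2).
  { apply (Rle_lt_trans _ (exp (1 / 2))); [apply exp_le_compat | exact exp_half_lt_2].
    apply (Rmult_le_reg_r t); [exact Ht |]. field_simplify; lra. }
  pose proof (rising_add_le t s n Ht Hs). pose proof (rising_pos t n Ht).
  nra.
Qed.

Lemma Rabs_rho_le_window (x : R) (a k B N : nat) : (1 <= a)%nat ->
  (2 * (B * S k) * S k <= a)%nat -> (a + B * S k <= N)%nat ->
  rising (INR a) (S k) < 2 * (x * INR (fact k)) <= rising (INR (S a)) (S k) ->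
  Rabs (rho N x) <= exp (- (3 * (/ (8 * 2 ^ k)) ^ 2)) ^ B.
Proof.
  intros Ha HB HN [Hbelow Habove].
  apply (Rle_trans _ _ _ (Rabs_rho_antimono _ _ x HN)).
  apply Rabs_rho_blocks; [apply Rlt_le, exp_pos |].
  intros i Hi.
  set (n := S (a + i * S k)).
  assert (Hwindow : 2 * (x * INR (fact k)) <= rising (INR n) (S k) <= 4 * (x * INR (fact k))).
  { split.
    - apply (Rle_trans _ _ _ Habove). apply rising_le_compat.
      split; [apply pos_INR | apply le_INR; unfold n; lia].
    - apply (Rle_trans _ (rising (INR a + INR (B * S k)) (S k))).
      + apply rising_le_compat. split; [apply pos_INR |].
        rewrite <- plus_INR. apply le_INR. unfold n. nia.
      + apply Rlt_le, (Rlt_le_trans _ (2 * rising (INR a) (S k))); [| lra].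
        apply rising_add_lt_double; [apply lt_0_INR; lia | apply pos_INR |].
        replace (2 * (INR (S k) * INR (B * S k))) with (INR (2 * (B * S k) * S k))
          by (rewrite !mult_INR; simpl; ring).
        apply le_INR, HB. }
  destruct (exists_far_from_Z x (INR n) k ltac:(apply lt_0_INR; unfold n; lia) Hwindow)
    as [j [Hj Hfar]].
  exists j. split; [exact Hj |].
  rewrite <- plus_INR in Hfar.
  change (n + j)%nat with (S (a + i * S k + j)) in Hfar.
  replace (PI * x / INR (S (a + i * S k + j))) with (PI * (x / INR (S (a + i * S k + j))))
    by (unfold Rdiv; ring).
  apply Rabs_cos_PI_far; [| exact Hfar].
  apply Rlt_le, Rinv_0_lt_compat. pose proof (pow_lt 2 k). lra.
Qed.

Lemma exists_crossing (P : nat -> Prop) (lo hi : nat) : (lo <= hi)%nat -> P lo -> ~ P hi ->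
  exists a, (lo <= a < hi)%nat /\ P a /\ ~ P (S a).
Proof.
  induction hi as [| hi IH]; intros Hle Plo Phi.
  - replace lo with O in Plo by lia. contradiction.
  - destruct (Nat.eq_dec lo (S hi)) as [-> | Hne]; [contradiction |].
    destruct (classic (P hi)) as [Ph | Ph].
    + exists hi. repeat split; auto; lia.
    + destruct (IH ltac:(lia) Plo Ph) as [a [Ha Pa]]. exists a. split; [lia | exact Pa].
Qed.

Lemma Rabs_rho_le_scale (x : R) (N M k lo : nat) : (1 <= lo)%nat -> (2 * M <= N)%nat ->
  rising (INR lo) (S k) < 2 * (x * INR (fact k)) <= rising (INR M) (S k) ->
  Rabs (rho N x) <= exp (3 / 64 - 3 / 128 * (INR lo / (4 ^ k * INR (S k) ^ 2))).
Proof.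
  intros Hlo HM [Hbelow Habove].
  assert (HloM : (lo <= M)%nat).
  { destruct (le_lt_dec lo M) as [| HMlo]; [assumption | exfalso].
    assert (rising (INR M) (S k) <= rising (INR lo) (S k)).
    { apply rising_le_compat. split; [apply pos_INR | apply le_INR; lia]. }
    lra. }
  destruct (exists_crossing (fun n => rising (INR n) (S k) < 2 * (x * INR (fact k))) lo M
              HloM Hbelow ltac:(lra)) as [a [[Hloa HaM] [Ha Ha']]].
  apply Rnot_lt_le in Ha'.
  set (d := (2 * S k * S k)%nat).
  set (B := (a / d)%nat).
  pose proof (Nat.div_mod a d ltac:(unfold d; lia)) as Hdiv.
  pose proof (Nat.mod_upper_bound a d ltac:(unfold d; lia)) as Hmod.
  fold B in Hdiv.
  apply (Rle_trans _ _ _ (Rabs_rho_le_window x a k B N ltac:(lia)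
    ltac:(unfold d in *; nia) ltac:(unfold d in *; nia) (conj Ha Ha'))).
  rewrite pow_eq_exp_ln, ln_exp by apply exp_pos.
  apply exp_le_compat.
  set (p := 4 ^ k). set (m := INR (S k) ^ 2).
  assert (Hp : 1 <= p) by (apply pow_R1_Rle; lra).
  assert (Hm : 0 < m) by (apply pow_lt, lt_0_INR; lia).
  assert (Hgap : (/ (8 * 2 ^ k)) ^ 2 = / 64 * / p).
  { unfold p. replace 4 with (2 * 2) by lra. rewrite Rpow_mult_distr.
    pose proof (pow_lt 2 k). field. lra. }
  assert (Hlo_a : INR lo <= INR a) by (apply le_INR, Hloa).
  assert (Ha_B : INR a < (INR B + 1) * (2 * m)).
  { replace ((INR B + 1) * (2 * m)) with (INR (d * (B + 1))) by (unfold d, m; rewrite !mult_INR, plus_INR; simpl; ring).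
    apply lt_INR. nia. }
  assert (Hratio : INR lo / (p * m) <= 2 * (INR B + 1) / p).
  { apply (Rmult_le_reg_r (p * m)); [nra |]. field_simplify; nra. }
  assert (Hinv : / p <= 1) by (rewrite <- Rinv_1; apply Rinv_le_contravar; lra).
  rewrite Hgap. unfold Rdiv in Hratio |- *. nra.
Qed.

Lemma fact_le_pow (n : nat) : INR (fact n) <= INR n ^ n.
Proof.
  induction n as [| n IH]; [simpl; lra |].
  rewrite fact_simpl, mult_INR.
  change (INR (S n) ^ S n) with (INR (S n) * INR (S n) ^ n).
  apply Rmult_le_compat_l; [apply pos_INR |].
  apply (Rle_trans _ _ _ IH). apply pow_incr. split; [apply pos_INR | apply le_INR; lia].
Qed.

Lemma two_mul_fact_le_rising (x t : R) (K : nat) : 0 < x -> 0 < t -> (1 <= K)%nat ->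
  ln 2 + ln x + INR K * ln (INR K) <= INR (S K) * ln t ->
  2 * (x * INR (fact K)) <= rising t (S K).
Proof.
  intros Hx Ht HK Hln.
  assert (HKpos : 0 < INR K) by (apply lt_0_INR; lia).
  apply (Rle_trans _ (2 * (x * INR K ^ K))).
  { pose proof (fact_le_pow K). apply Rmult_le_compat_l; [lra |]. apply Rmult_le_compat_l; lra. }
  apply (Rle_trans _ (t ^ S K)); [| apply pow_le_rising; lra].
  rewrite (pow_eq_exp_ln (INR K)), (pow_eq_exp_ln t) by assumption.
  replace (2 * (x * exp (INR K * ln (INR K)))) with (exp (ln 2 + ln x + INR K * ln (INR K)))
    by (rewrite !exp_plus, !exp_ln by lra; ring).
  apply exp_le_compat, Hln.
Qed.

Lemma exists_critical_order (x t : R) (K : nat) : 0 < t -> t < 2 * x ->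
  2 * (x * INR (fact K)) <= rising t (S K) ->
  exists k, (1 <= k <= K)%nat /\ t ^ k < 2 * (x * INR (fact k)) <= rising t (S k).
Proof.
  intros Ht Htx HK.
  destruct (exists_crossing (fun j => rising t (S j) < 2 * (x * INR (fact j))) O K
              (Nat.le_0_l K) ltac:(simpl; lra) ltac:(lra)) as [a [Ha [Pa Pa']]].
  exists (S a). split; [lia |]. split; [| apply Rnot_lt_le, Pa'].
  apply (Rle_lt_trans _ _ _ (pow_le_rising t (S a) (Rlt_le _ _ Ht))).
  apply (Rlt_le_trans _ _ _ Pa).
  rewrite fact_simpl, mult_INR, S_INR.
  pose proof (pos_INR a). pose proof (lt_0_INR _ (lt_O_fact a)).
  assert (0 < x) by lra.
  apply Rmult_le_compat_l; [lra |]. apply Rmult_le_compat_l; [lra |]. nra.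
Qed.

Lemma half_bounds (N : nat) : (2 <= N)%nat -> (1 <= N / 2 /\ 2 * (N / 2) <= N <= 3 * (N / 2))%nat.
Proof.
  intros HN. pose proof (Nat.div_mod N 2 ltac:(lia)). pose proof (Nat.mod_upper_bound N 2 ltac:(lia)).
  lia.
Qed.

Lemma ln_sub_ln3_le_ln_half (N : nat) : (2 <= N)%nat -> ln (INR N) - ln 3 <= ln (INR (N / 2)).
Proof.
  intros HN. destruct (half_bounds N HN) as [_ [_ H3]].
  apply le_INR in H3. rewrite mult_INR in H3. replace (INR 3) with 3 in H3 by (simpl; lra).
  assert (2 <= INR N) by (change 2 with (INR 2); apply le_INR, HN).
  rewrite <- ln_div by lra. apply ln_le; [lra |]. lra.
Qed.

(* With [L = ln N]: [2 exp (C L^2) K^K <= (N/3)^(K+1)] for [K] close to [C' L]. *)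
Definition admissible_order (C C' L : R) : Prop :=
  forall K, C' * L <= K <= C' * L + 1 ->
    ln 2 + C * L ^ 2 + K * ln K <= (K + 1) * (L - ln 3).

(* With [L = ln N]: [(200 4^k (k+1)^2 exp (eta L))^(k+1) <= (N/3)^k]. *)
Definition admissible_start (C' eta L : R) : Prop :=
  forall k, 1 <= k <= C' * L + 1 ->
    (k + 1) * (ln 200 + k * ln 4 + 2 * ln (k + 1) + eta * L) <= k * (L - ln 3).

Lemma exists_critical_order_of_admissible (C C' x : R) (N : nat) :
  0 < C' -> (2 <= N)%nat -> INR N <= x -> x <= exp (C * ln (INR N) ^ 2) ->
  admissible_order C C' (ln (INR N)) ->
  exists k, (1 <= k)%nat /\ INR k <= C' * ln (INR N) + 1 /\
    INR (N / 2) ^ k < 2 * (x * INR (fact k)) <= rising (INR (N / 2)) (S k).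
Proof.
  intros HC' HN Hx Hx' Hadm.
  assert (HN2 : 2 <= INR N) by (change 2 with (INR 2); apply le_INR, HN).
  assert (HL : 0 < ln (INR N)) by (apply ln_pos; lra).
  destruct (half_bounds N HN) as [HM1 [HM2 _]].
  assert (HM : 1 <= INR (N / 2) <= INR N / 2).
  { apply le_INR in HM1, HM2. rewrite mult_INR in HM2.
    replace (INR 2) with 2 in HM2 by (simpl; lra). rewrite INR_1 in HM1. lra. }
  destruct (exists_nat_between (C' * ln (INR N))) as [K HK]; [nra |].
  assert (HK1 : (1 <= K)%nat) by (destruct K; [simpl in HK; nra | lia]).
  destruct (exists_critical_order x (INR (N / 2)) K) as [k [Hk Hcrit]]; [lra | lra | |].
  - apply two_mul_fact_le_rising; [lra | lra | exact HK1 |].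
    assert (Hlnx : ln x <= C * ln (INR N) ^ 2) by (rewrite <- (ln_exp (C * _)); apply ln_le; lra).
    pose proof (ln_sub_ln3_le_ln_half N HN). pose proof (pos_INR K).
    pose proof (Hadm (INR K) HK). rewrite S_INR.
    apply (Rle_trans _ ((INR K + 1) * (ln (INR N) - ln 3))); [lra |].
    apply Rmult_le_compat_l; lra.
  - exists k. split; [lia |]. split; [| exact Hcrit].
    apply (Rle_trans _ (INR K)); [apply le_INR; lia | lra].
Qed.

Lemma rising_le_exp_mul (lam : R) (lo n : nat) : INR lo + INR n <= exp lam ->
  rising (INR lo) n <= exp (INR n * lam).
Proof.
  intros Hlam.
  apply (Rle_trans _ _ _ (rising_le_pow (INR lo) n (pos_INR lo))).
  rewrite <- (ln_exp lam). rewrite <- pow_eq_exp_ln by apply exp_pos.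
  apply pow_incr. pose proof (pos_INR lo). pose proof (pos_INR n). lra.
Qed.

Lemma Rabs_rho_le_critical (x e : R) (N M k : nat) :
  (1 <= M)%nat -> (2 * M <= N)%nat -> 0 <= e ->
  INR (S k) * (ln 200 + INR k * ln 4 + 2 * ln (INR k + 1) + e) <= INR k * ln (INR M) ->
  INR M ^ k < 2 * (x * INR (fact k)) <= rising (INR M) (S k) ->
  Rabs (rho N x) <= exp (- (PI ^ 2 / 400 ^ 2) * exp e).
Proof.
  intros HM HMN He Hlam [Hlow Hcrit].
  set (lam := ln 200 + INR k * ln 4 + 2 * ln (INR k + 1) + e) in Hlam.
  set (A := 4 ^ k * INR (S k) ^ 2 * exp e).
  pose proof (pos_INR k) as Hk.
  assert (HA : exp lam = 200 * A).
  { unfold lam, A. rewrite !exp_plus, exp_ln by lra.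
    rewrite (pow_eq_exp_ln 4) by lra. rewrite (pow_eq_exp_ln (INR (S k))) by (apply lt_0_INR; lia).
    replace (INR 2) with 2 by (simpl; lra). rewrite S_INR. ring. }
  assert (HAk : INR k + 1 <= A).
  { unfold A. rewrite S_INR.
    pose proof (pow_R1_Rle 4 k ltac:(lra)). pose proof (exp_ineq1_le e).
    assert (INR k + 1 <= (INR k + 1) ^ 2) by nra.
    assert (1 <= 4 ^ k * exp e) by nra.
    nra. }
  destruct (exists_nat_between (100 * A)) as [lo Hlo]; [lra |].
  assert (Hlo1 : (1 <= lo)%nat) by (destruct lo; [simpl in Hlo; lra | lia]).
  assert (Hstart : rising (INR lo) (S k) < 2 * (x * INR (fact k))).
  { apply (Rle_lt_trans _ (exp (INR (S k) * lam))).
    { apply rising_le_exp_mul. rewrite HA, S_INR. lra. }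
    apply (Rle_lt_trans _ (INR M ^ k)); [| exact Hlow].
    rewrite (pow_eq_exp_ln (INR M)) by (apply lt_0_INR; lia).
    apply exp_le_compat, Hlam. }
  apply (Rle_trans _ _ _ (Rabs_rho_le_scale x N M k lo Hlo1 HMN (conj Hstart Hcrit))).
  apply exp_le_compat.
  assert (Hratio : 100 * exp e <= INR lo / (4 ^ k * INR (S k) ^ 2)).
  { unfold A in Hlo. set (q := 4 ^ k * INR (S k) ^ 2) in *.
    assert (0 < q) by (apply Rmult_lt_0_compat; apply pow_lt; [lra | apply lt_0_INR; lia]).
    apply (Rmult_le_reg_r q); [assumption |].
    replace (INR lo / q * q) with (INR lo) by (field; lra).
    lra. }
  assert (HPI : PI ^ 2 / 400 ^ 2 <= 1 / 10000) by (pose proof PI_RGT_0; pose proof PI_4; nra).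
  pose proof (exp_pos e). pose proof (exp_ineq1_le e).
  nra.
Qed.

Lemma eventually_ln_le (eps : R) : 0 < eps -> Rbar_locally p_infty (fun y => ln y <= eps * y).
Proof.
  intros Heps.
  destruct (proj2 (is_lim_spec _ _ _) is_lim_div_ln_p (mkposreal eps Heps)) as [M HM].
  exists (Rmax M 0). intros y Hy.
  assert (Hy0 : 0 < y) by (apply Rle_lt_trans with (2 := Hy), Rmax_r).
  specialize (HM y (Rle_lt_trans _ _ _ (Rmax_l M 0) Hy)). simpl in HM.
  rewrite Rminus_0_r in HM. apply Rabs_lt_between in HM.
  apply (Rmult_le_reg_r (/ y)); [apply Rinv_0_lt_compat, Hy0 |].
  replace (eps * y * / y) with eps by (field; lra). lra.
Qed.

Lemma eventually_admissible_order (C C' : R) : 0 < C < C' ->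
  Rbar_locally p_infty (admissible_order C C').
Proof.
  intros [HC HCC'].
  set (eps := (C' - C) / (4 * C' ^ 2)).
  assert (Heps : 0 < eps) by (apply Rdiv_lt_0_compat; nra).
  destruct (eventually_ln_le eps Heps) as [Y HY].
  set (c := ln 2 + 2 * eps + 2 * ln 3 + C' * ln 3).
  exists (Rmax (Rmax (Y / C') 1) (2 * c / (C' - C))).
  intros L HL K HK.
  apply Rmax_Rlt in HL as [HL HLc]. apply Rmax_Rlt in HL as [HLY HL1].
  assert (HKY : Y < K).
  { apply (Rmult_lt_compat_l C') in HLY; [| lra].
    replace (C' * (Y / C')) with Y in HLY by (field; lra). lra. }
  assert (Hc : c <= (C' - C) / 2 * L).
  { apply (Rmult_lt_compat_l ((C' - C) / 2)) in HLc; [| lra].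
    replace ((C' - C) / 2 * (2 * c / (C' - C))) with c in HLc by (field; lra). lra. }
  assert (Hln3 : 0 < ln 3) by (apply ln_pos; lra).
  assert (Hln2 : 0 < ln 2) by (apply ln_pos; lra).
  assert (HKlnK : K * ln K <= eps * (C' * L + 1) ^ 2).
  { assert (HK0 : 0 <= K) by nra.
    apply (Rle_trans _ (K * (eps * K))); [apply Rmult_le_compat_l; [exact HK0 | apply HY, HKY] |].
    replace (K * (eps * K)) with (eps * K ^ 2) by ring.
    apply Rmult_le_compat_l; [lra |]. apply pow_incr. nra. }
  assert (Hsq : eps * (C' * L + 1) ^ 2 <= (C' - C) / 2 * L ^ 2 + 2 * eps).
  { assert (Heps2 : eps * (2 * C' ^ 2) = (C' - C) / 2) by (unfold eps; field; lra).
    assert ((C' * L + 1) ^ 2 <= 2 * C' ^ 2 * L ^ 2 + 2) by (pose proof (pow2_ge_0 (C' * L - 1)); nra).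
    apply (Rle_trans _ (eps * (2 * C' ^ 2 * L ^ 2 + 2))); [apply Rmult_le_compat_l; lra |].
    rewrite <- Heps2. lra. }
  assert (Hc2 : c * L <= (C' - C) / 2 * L ^ 2) by nra.
  assert (HcL : ln 2 + 2 * eps + 2 * ln 3 + C' * L * ln 3 <= c * L) by (unfold c; nra).
  nra.
Qed.

Lemma eventually_admissible_start (C' eta : R) : 0 < C' -> 0 <= eta ->
  C' * ln 4 + 2 * eta < 1 -> Rbar_locally p_infty (admissible_start C' eta).
Proof.
  intros HC' Heta Hsum.
  set (gam := 1 - C' * ln 4 - 2 * eta).
  set (eps := gam / (8 * C')).
  assert (Heps : 0 < eps) by (apply Rdiv_lt_0_compat; unfold gam; lra).
  destruct (eventually_ln_le eps Heps) as [Y HY].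
  set (c := 2 * ln 4 + 2 * ln 200 + 8 * eps + ln 3).
  exists (Rmax (Rmax (Y / C') 0) (2 * c / gam)).
  intros L HL k Hk.
  apply Rmax_Rlt in HL as [HL HLc]. apply Rmax_Rlt in HL as [HLY HL0].
  assert (HYL : Y < C' * L + 2).
  { apply (Rmult_lt_compat_l C') in HLY; [| lra].
    replace (C' * (Y / C')) with Y in HLY by (field; lra). lra. }
  assert (Hc : c <= gam / 2 * L).
  { apply (Rmult_lt_compat_l (gam / 2)) in HLc; [| unfold gam; lra].
    replace (gam / 2 * (2 * c / gam)) with c in HLc by (field; unfold gam; lra). lra. }
  assert (Hln200 : 0 < ln 200) by (apply ln_pos; lra).
  assert (Hln4 : 0 < ln 4) by (apply ln_pos; lra).
  assert (Hlnk : 0 <= ln (k + 1)) by (apply ln_nonneg; lra).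
  assert (Hlnk' : ln (k + 1) <= eps * (C' * L + 2)).
  { apply (Rle_trans _ (ln (C' * L + 2))); [apply ln_le; lra | apply HY, HYL]. }
  assert (H4eps : 4 * eps * C' = gam / 2) by (unfold eps; field; lra).
  set (r := ln 200 + 2 * ln (k + 1) + eta * L).
  assert (Hr : 0 <= r) by (unfold r; nra).
  assert (Hkey : (k + 1) * ln 4 + 2 * r <= L - ln 3).
  { unfold r, gam, c in *. nra. }
  assert ((k + 1) * r <= 2 * k * r) by nra.
  replace (ln 200 + k * ln 4 + 2 * ln (k + 1) + eta * L) with (k * ln 4 + r) by (unfold r; ring).
  nra.
Qed.

Lemma scaled_sqrt_ln_le (C eta L x : R) : 0 < C -> 0 <= eta -> 0 <= L -> 1 <= x ->
  x <= exp (C * L ^ 2) -> eta / sqrt C * sqrt (ln x) <= eta * L.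
Proof.
  intros HC Heta HL Hx Hx'.
  assert (HsC : 0 < sqrt C) by (apply sqrt_lt_R0, HC).
  assert (Hln : ln x <= C * L ^ 2) by (rewrite <- (ln_exp (C * L ^ 2)); apply ln_le; lra).
  assert (Hsqrt : sqrt (ln x) <= sqrt C * L).
  { apply (Rle_trans _ _ _ (sqrt_le_1_alt _ _ Hln)).
    rewrite sqrt_mult_alt, sqrt_pow2 by lra. lra. }
  replace (eta * L) with (eta / sqrt C * (sqrt C * L)) by (field; lra).
  apply Rmult_le_compat_l; [apply Rdiv_le_0_compat; lra | exact Hsqrt].
Qed.

Lemma Rabs_rho_le_of_admissible (C C' eta x : R) (N : nat) :
  0 < C' -> 0 <= eta -> (2 <= N)%nat -> INR N <= x -> x <= exp (C * ln (INR N) ^ 2) ->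
  admissible_order C C' (ln (INR N)) -> admissible_start C' eta (ln (INR N)) ->
  Rabs (rho N x) <= exp (- (PI ^ 2 / 400 ^ 2) * exp (eta * ln (INR N))).
Proof.
  intros HC' Heta HN Hx Hx' Hord Hstart.
  assert (HL : 0 <= ln (INR N)) by (apply ln_nonneg, (le_INR 1); lia).
  destruct (exists_critical_order_of_admissible C C' x N HC' HN Hx Hx' Hord)
    as [k [Hk1 [HkL Hcrit]]].
  destruct (half_bounds N HN) as [HM1 [HM2 _]].
  apply (Rabs_rho_le_critical x _ N (N / 2) k HM1 HM2); [nra | | exact Hcrit].
  rewrite S_INR. apply (Rle_trans _ _ _ (Hstart (INR k) (conj (le_INR 1 k Hk1) HkL))).
  apply Rmult_le_compat_l; [apply pos_INR | apply ln_sub_ln3_le_ln_half, HN].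
Qed.

(* Any [C < C' < 1 / ln 4] and [0 <= eta < (1 - C' ln 4) / 2] would do. *)
Lemma eventually_admissible (C : R) : 0 < C -> C * ln 4 < 1 ->
  Rbar_locally p_infty (fun L => admissible_order C ((C + 1 / ln 4) / 2) L /\
    admissible_start ((C + 1 / ln 4) / 2) ((1 - C * ln 4) / 8) L).
Proof.
  intros HC Hc.
  assert (Hln4 : 0 < ln 4) by (apply ln_pos; lra).
  assert (HC' : (C + 1 / ln 4) / 2 * ln 4 = (C * ln 4 + 1) / 2) by (field; lra).
  assert (HC4 : C < 1 / ln 4).
  { apply (Rmult_lt_reg_r (ln 4)); [exact Hln4 |]. replace (1 / ln 4 * ln 4) with 1 by (field; lra). lra. }
  apply filter_and.
  - apply eventually_admissible_order. lra.
  - apply eventually_admissible_start; lra.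
Qed.

Theorem proposition3p5 :
  forall C : R, 0 < C -> C < 1 / ln 4 ->
  exists E : R, 0 < E /\
    exists N0 : nat, forall N : nat, (N0 <= N)%nat -> (1 <= N)%nat ->
      forall x : R, INR N <= x -> x <= exp (C * (ln (INR N)) ^ 2) ->
        Rabs (rho N x) <= exp (- (PI ^ 2 / 400 ^ 2) * exp (E * sqrt (ln x))).
Proof.
  intros C HC HC4.
  assert (Hln4 : 0 < ln 4) by (apply ln_pos; lra).
  assert (Hc : C * ln 4 < 1).
  { apply (Rmult_lt_compat_r (ln 4)) in HC4; [| lra].
    replace (1 / ln 4 * ln 4) with 1 in HC4 by (field; lra). lra. }
  set (eta := (1 - C * ln 4) / 8).
  destruct (eventually_admissible C HC Hc) as [L0 HL0].
  exists (eta / sqrt C). split; [apply Rdiv_lt_0_compat; [unfold eta; lra | apply sqrt_lt_R0, HC] |].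
  destruct (exists_nat_between (exp L0)) as [N0 HN0]; [apply Rlt_le, exp_pos |].
  exists (S (S N0)). intros N HN _ x Hx Hx'.
  assert (HL : L0 < ln (INR N)).
  { rewrite <- (ln_exp L0). apply ln_increasing; [apply exp_pos |].
    apply (Rle_lt_trans _ _ _ (proj1 HN0)), lt_INR. lia. }
  destruct (HL0 _ HL) as [Hord Hstart].
  assert (HC' : 0 < (C + 1 / ln 4) / 2) by (pose proof (Rdiv_lt_0_compat 1 (ln 4) Rlt_0_1 Hln4); lra).
  assert (Heta : 0 <= eta) by (unfold eta; lra).
  apply (Rle_trans _ _ _ (Rabs_rho_le_of_admissible C _ eta x N HC' Heta ltac:(lia) Hx Hx' Hord Hstart)).
  apply exp_neg_mul_exp_le; [apply Rdiv_le_0_compat; [apply pow2_ge_0 | apply pow_lt; lra] |].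
  apply scaled_sqrt_ln_le; [exact HC | exact Heta | apply ln_nonneg, (le_INR 1); lia | | exact Hx'].
  apply (Rle_trans _ (INR N)); [apply (le_INR 1); lia | exact Hx].
Qed.
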